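(* For $\omega>0$ and $S>0$ let $\sigma=e^{-\sqrt6 S}$, $A=\sqrt{1+\frac{\omega}{2S^2}}$, and $$\Xi(S,\omega)={}_2F_1(1,2A+2,2A+3,\sigma)=(2A+2)\sum_{n\ge0}\frac{\sigma^n}{n+2A+2}.$$ Then, as $S\to0^+$ with $\omega$ fixed, $$\Xi(S,\omega)=\xi_{-1}\bigl(2\sqrt{3\omega}\bigr)\frac{\sqrt6}{S}+\xi_0\bigl(2\sqrt{3\omega}\bigr)+O(S),$$ where $\xi_{-1}(r)=\frac16\,r\,e^rE_1(r)$, $\xi_0(r)=\frac12\bigl(4(1+r)e^rE_1(r)-3\bigr)$ and $E_1(r)=\int_r^\infty e^{-t}\frac{dt}{t}$. *)

From Stdlib Require Import Reals.
Open Scope R_scope.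

Definition improper_int_infty (f : R -> R) (a l : R) : Prop :=
  (forall M, a <= M -> exists _ : Riemann_integrable f a M, True) /\
  forall eps, eps > 0 -> exists M0, forall M, M >= M0 -> M >= a ->
    exists pr : Riemann_integrable f a M, Rabs (RiemannInt pr - l) < eps.

Definition is_E1 (E1 : R -> R) : Prop :=
  forall r, r > 0 -> improper_int_infty (fun t => exp (- t) / t) r (E1 r).

Definition sigma (S : R) : R := exp (- (sqrt 6 * S)).
Definition Aparam (S omega : R) : R := sqrt (1 + omega / (2 * S ^ 2)).

Definition Xi_term (S omega : R) (n : nat) : R :=
  (2 * Aparam S omega + 2) * (sigma S ^ n / (INR n + 2 * Aparam S omega + 2)).

Definition xi_m1 (E1 : R -> R) (r : R) : R := / 6 * r * exp r * E1 r.
Definition xi_0 (E1 : R -> R) (r : R) : R := / 2 * (4 * (1 + r) * exp r * E1 r - 3).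

From Pilot Require Import Defs.
From Stdlib Require Import Reals Lra Psatz.
From Coquelicot Require Import Coquelicot.
Open Scope R_scope.

(* With [e = sqrt 6 * S] and [s = e (2A + 2)], the n-th term of the series is
   [s e^s g (s + n e)] for [g t = e^(-t) / t], so the series is a Riemann sum of the
   convex decreasing function [g], and the trapezoid rule gives
   [Xi = s e^s E1(s) / e + 1/2 + O(e)].  Moreover [(s - 2e)^2 = r^2 + 4 e^2] with
   [r = 2 sqrt (3 omega)], hence [s = r + 2e + O(e^2)], and a first-order expansion of
   [t e^t E1(t)] at [r] (derivative [(1 + r) e^r E1(r) - 1]) turns this into the
   stated two-term expansion with an [O(e) = O(S)] error. *)

Lemma improper_int_infty_RInt f a l : improper_int_infty f a l ->
  (forall M, a <= M -> ex_RInt f a M) /\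
  (forall eps, 0 < eps -> exists M0, forall M, M >= M0 -> M >= a ->
     Rabs (RInt f a M - l) < eps).
Proof.
  intros [Hint Hlim]. split.
  - intros M HM. destruct (Hint M HM) as [pr _]. exact (ex_RInt_Reals_1 f a M pr).
  - intros eps Heps. destruct (Hlim eps Heps) as [M0 HM0]. exists M0. intros M HM HMa.
    destruct (HM0 M HM HMa) as [pr Hpr]. rewrite (RInt_Reals f a M pr). exact Hpr.
Qed.

Lemma improper_int_infty_sub f a b la lb : a <= b ->
  improper_int_infty f a la -> improper_int_infty f b lb -> la - lb = RInt f a b.
Proof.
  intros Hab Ia Ib.
  destruct (improper_int_infty_RInt f a la Ia) as [Exa La].
  destruct (improper_int_infty_RInt f b lb Ib) as [_ Lb].
  assert (Hsmall : forall eps, 0 < eps -> Rabs (la - lb - RInt f a b) < 2 * eps).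
  { intros eps Heps. destruct (La eps Heps) as [M1 H1]. destruct (Lb eps Heps) as [M2 H2].
    set (M := Rmax b (Rmax M1 M2)).
    pose proof (Rmax_l b (Rmax M1 M2)). pose proof (Rmax_r b (Rmax M1 M2)).
    pose proof (Rmax_l M1 M2). pose proof (Rmax_r M1 M2).
    specialize (H1 M ltac:(unfold M; lra) ltac:(unfold M; lra)).
    specialize (H2 M ltac:(unfold M; lra) ltac:(unfold M; lra)).
    assert (Hchasles : RInt f a M = RInt f a b + RInt f b M).
    { symmetry. apply (RInt_Chasles f a b M).
      - apply (ex_RInt_Chasles_1 f a b M); [unfold M; lra | apply Exa; unfold M; lra].
      - apply (ex_RInt_Chasles_2 f a b M); [unfold M; lra | apply Exa; unfold M; lra]. }
    apply Rabs_def2 in H1. apply Rabs_def2 in H2. apply Rabs_def1; lra. }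
  destruct (Req_dec (la - lb) (RInt f a b)) as [| Hne]; [assumption |].
  assert (Hz : 0 < Rabs (la - lb - RInt f a b)) by (apply Rabs_pos_lt; lra).
  specialize (Hsmall _ (Rmult_lt_0_compat _ _ Hz (Rinv_0_lt_compat 4 ltac:(lra)))). lra.
Qed.

Lemma is_RInt_affine a b u e :
  is_RInt (fun y => a + b * (y - u)) u (u + e) (a * e + b * e ^ 2 / 2).
Proof.
  set (F y := a * y + b * (y - u) ^ 2 / 2).
  replace (a * e + b * e ^ 2 / 2) with (minus (F (u + e)) (F u))
    by (unfold F, minus, plus, opp; simpl; field).
  apply (is_RInt_derive (V := R_CompleteNormedModule) F).
  - intros x _. unfold F. auto_derive; [easy | simpl; field].
  - intros x _. apply (ex_derive_continuous (fun y => a + b * (y - u))). auto_derive. easy.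
Qed.

Lemma RInt_affine a b u e :
  RInt (fun y => a + b * (y - u)) u (u + e) = a * e + b * e ^ 2 / 2.
Proof. apply is_RInt_unique, is_RInt_affine. Qed.

Section TrapezoidRule.

Variables f f' : R -> R.
Hypothesis f_tangent : forall x y, 0 < x -> 0 < y -> f x + f' x * (y - x) <= f y.
Hypothesis f'_nonpos : forall x, 0 < x -> f' x <= 0.
Hypothesis f_nonneg : forall x, 0 < x -> 0 <= f x.
Hypothesis f_vanishes : forall eps, 0 < eps -> exists M, forall x, M <= x -> f x < eps.

Lemma decreasing_on_pos x y : 0 < x <= y -> f y <= f x.
Proof.
  intros [Hx Hxy]. pose proof (f_tangent y x ltac:(lra) Hx). pose proof (f'_nonpos y ltac:(lra)). nra.
Qed.

Lemma RInt_tangent_bounds u d : 0 < u -> 0 <= d -> ex_RInt f u (u + d) ->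
  d * f u + f' u * d ^ 2 / 2 <= RInt f u (u + d) <= d * f u.
Proof.
  intros Hu Hd Hex. split.
  - replace (d * f u + f' u * d ^ 2 / 2) with (f u * d + f' u * d ^ 2 / 2) by ring.
    rewrite <- (RInt_affine _ _ u d).
    apply RInt_le; [lra | eexists; apply is_RInt_affine | exact Hex |].
    intros y Hy. apply f_tangent; lra.
  - replace (d * f u) with (f u * d + 0 * d ^ 2 / 2) by lra. rewrite <- (RInt_affine _ _ u d).
    apply RInt_le; [lra | exact Hex | eexists; apply is_RInt_affine |].
    intros y Hy. rewrite Rmult_0_l, Rplus_0_r. apply decreasing_on_pos; lra.
Qed.

(* The chord lies above [f], and the tangent at [u] below it. *)
Lemma RInt_chord_bounds u e : 0 < u -> 0 < e -> ex_RInt f u (u + e) ->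
  0 <= e * (f u + f (u + e)) / 2 - RInt f u (u + e) <= e ^ 2 * (f' (u + e) - f' u) / 2.
Proof.
  intros Hu He Hex. split.
  - set (slope := (f (u + e) - f u) / e).
    assert (Hchord : RInt f u (u + e) <= RInt (fun y => f u + slope * (y - u)) u (u + e)).
    { apply RInt_le; [lra | exact Hex | eexists; apply is_RInt_affine |].
      intros y Hy. set (l := (y - u) / e).
      assert (Hl : 0 <= l <= 1) by (unfold l; split; apply Rmult_le_reg_r with e; field_simplify; lra).
      assert (Hy' : y = u + l * e) by (unfold l; field; lra).
      assert (Hslope : slope * (y - u) = l * (f (u + e) - f u)) by (rewrite Hy'; unfold slope; field; lra).
      rewrite Hslope. clearbody l. subst y.
      pose proof (f_tangent (u + l * e) u ltac:(nra) Hu).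
      pose proof (f_tangent (u + l * e) (u + e) ltac:(nra) ltac:(lra)).
      nra. }
    rewrite RInt_affine in Hchord.
    replace (e * (f u + f (u + e)) / 2) with (f u * e + slope * e ^ 2 / 2) by (unfold slope; field; lra).
    lra.
  - pose proof (RInt_tangent_bounds u e Hu ltac:(lra) Hex).
    pose proof (f_tangent (u + e) u ltac:(lra) Hu).
    nra.
Qed.

Lemma trapezoid_partial_sum s e : 0 < s -> 0 < e -> (forall M, s <= M -> ex_RInt f s M) ->
  forall N,
  0 <= e * sum_f_R0 (fun n => f (s + INR n * e)) N - e * (f s + f (s + INR N * e)) / 2
       - RInt f s (s + INR N * e)
  <= e ^ 2 * (f' (s + INR N * e) - f' s) / 2.
Proof.
  intros Hs He Hex. induction N as [| N IH].
  - simpl. rewrite Rmult_0_l, Rplus_0_r, RInt_point. unfold zero; simpl. lra.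
  - set (u := s + INR N * e) in *.
    assert (Hu : s + INR (S N) * e = u + e) by (rewrite S_INR; unfold u; ring).
    assert (Hsu : s <= u) by (unfold u; pose proof (pos_INR N); nra).
    rewrite tech5. cbv beta. rewrite !Hu.
    assert (Hex_u : ex_RInt f u (u + e))
      by exact (ex_RInt_Chasles_2 f s u (u + e) ltac:(lra) (Hex (u + e) ltac:(lra))).
    rewrite <- (RInt_Chasles f s u (u + e) (Hex u Hsu) Hex_u).
    pose proof (RInt_chord_bounds u e ltac:(lra) He Hex_u).
    change plus with Rplus. lra.
Qed.

Lemma trapezoid_series s e l P : 0 < s -> 0 < e -> improper_int_infty f s l ->
  infinite_sum (fun n => f (s + INR n * e)) P ->
  0 <= e * P - e * f s / 2 - l <= - e ^ 2 * f' s / 2.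
Proof.
  intros Hs He Hl HP. destruct (improper_int_infty_RInt f s l Hl) as [Hex Hlim].
  assert (Hfar : forall eta, 0 < eta -> exists N,
     Rabs (sum_f_R0 (fun n => f (s + INR n * e)) N - P) < eta /\
     Rabs (RInt f s (s + INR N * e) - l) < eta /\ f (s + INR N * e) < eta).
  { intros eta Heta.
    destruct (HP eta Heta) as [N1 HN1].
    destruct (Hlim eta Heta) as [M1 HM1].
    destruct (f_vanishes eta Heta) as [M2 HM2].
    destruct (INR_unbounded (Rmax M1 M2 / e)) as [N2 HN2].
    exists (N1 + N2)%nat.
    assert (HN : Rmax M1 M2 <= s + INR (N1 + N2) * e).
    { rewrite plus_INR. pose proof (pos_INR N1).
      apply (Rmult_gt_compat_r e) in HN2; [| exact He].
      unfold Rdiv in HN2. rewrite Rmult_assoc, Rinv_l in HN2; nra. }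
    pose proof (Rmax_l M1 M2). pose proof (Rmax_r M1 M2).
    pose proof (pos_INR (N1 + N2)).
    repeat split.
    - apply HN1. lia.
    - apply HM1; nra.
    - apply HM2. lra. }
  split; apply Rle_plus_epsilon; intros eps Heps;
    destruct (Hfar (eps / (2 * e + 1))) as [N [H1 [H2 H3]]];
    try (apply Rdiv_lt_0_compat; lra);
    pose proof (trapezoid_partial_sum s e Hs He Hex N);
    pose proof (pos_INR N);
    apply Rabs_def2 in H1; apply Rabs_def2 in H2;
    assert (Heta : 2 * e * (eps / (2 * e + 1)) + eps / (2 * e + 1) = eps) by (field; lra).
  - pose proof (f_nonneg (s + INR N * e) ltac:(nra)). nra.
  - pose proof (f'_nonpos (s + INR N * e) ltac:(nra)). nra.
Qed.

End TrapezoidRule.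

Definition E1_integrand (t : R) : R := exp (- t) / t.
Definition E1_integrand' (t : R) : R := - (exp (- t) * (/ t + / t ^ 2)).

Lemma E1_integrand_tangent x y : 0 < x -> 0 < y ->
  E1_integrand x + E1_integrand' x * (y - x) <= E1_integrand y.
Proof.
  intros Hx Hy. unfold E1_integrand, E1_integrand'.
  set (d := y - x).
  assert (Hexp : exp (- y) = exp (- x) * exp (- d)) by (rewrite <- exp_plus; f_equal; unfold d; ring).
  assert (He : 0 < exp (- x)) by apply exp_pos.
  assert (Hlin : exp (- x) * (1 - d) <= exp (- y)).
  { rewrite Hexp. apply Rmult_le_compat_l; [lra |]. pose proof (exp_ineq1_le (- d)). lra. }
  set (num := exp (- y) * x ^ 2 - exp (- x) * x ^ 2 - exp (- x) * x * d + exp (- x) * (x + 1) * d * y).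
  assert (Hnum : 0 <= num).
  { assert (Hy' : y = x + d) by (unfold d; ring).
    assert (exp (- x) * (1 - d) * x ^ 2 <= exp (- y) * x ^ 2) by (apply Rmult_le_compat_r; nra).
    assert (0 <= exp (- x) * (x + 1) * d ^ 2) by (apply Rmult_le_pos; nra).
    unfold num. clearbody d. subst y. nra. }
  assert (Hdiff : exp (- y) / y - (exp (- x) / x + - (exp (- x) * (/ x + / x ^ 2)) * d)
                  = num / (x ^ 2 * y)) by (unfold num, d; field; split; apply Rgt_not_eq; lra).
  assert (0 <= num / (x ^ 2 * y)) by (apply Rdiv_le_0_compat; [exact Hnum | apply Rmult_lt_0_compat; nra]).
  lra.
Qed.

Lemma E1_integrand'_nonpos x : 0 < x -> E1_integrand' x <= 0.
Proof.
  intros Hx. unfold E1_integrand'. pose proof (exp_pos (- x)).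
  assert (0 < / x) by (apply Rinv_0_lt_compat; lra).
  assert (0 < / x ^ 2) by (apply Rinv_0_lt_compat; nra). nra.
Qed.

Lemma E1_integrand_nonneg x : 0 < x -> 0 <= E1_integrand x.
Proof. intros Hx. left. apply Rdiv_lt_0_compat; [apply exp_pos | exact Hx]. Qed.

Lemma E1_integrand_le_inv x : 0 < x -> E1_integrand x <= / x.
Proof.
  intros Hx. unfold E1_integrand, Rdiv. rewrite <- (Rmult_1_l (/ x)) at 2.
  apply Rmult_le_compat_r; [left; apply Rinv_0_lt_compat, Hx |].
  rewrite <- exp_0. left. apply exp_increasing. lra.
Qed.

Lemma E1_integrand_vanishes eps : 0 < eps ->
  exists M, forall x, M <= x -> E1_integrand x < eps.
Proof.
  intros Heps. exists (2 / eps). intros x Hx.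
  assert (H2 : 0 < 2 / eps) by (apply Rdiv_lt_0_compat; lra).
  eapply Rle_lt_trans; [apply E1_integrand_le_inv; lra |].
  apply (Rmult_lt_reg_l x); [lra |]. rewrite Rinv_r by lra.
  apply (Rmult_le_compat_r eps) in Hx; [| lra].
  unfold Rdiv in Hx. rewrite Rmult_assoc, Rinv_l in Hx; lra.
Qed.

Definition is_taylor1 (F : R -> R) (a0 a1 : R) : Prop :=
  exists K, forall d, 0 <= d <= / 2 -> Rabs (F d - (a0 + a1 * d)) <= K * d ^ 2.

Lemma is_taylor1_affine a b : is_taylor1 (fun d => a + b * d) a b.
Proof. exists 0. intros d _. rewrite Rminus_diag, Rabs_R0. lra. Qed.

Lemma is_taylor1_mult F G a0 a1 b0 b1 :
  is_taylor1 F a0 a1 -> is_taylor1 G b0 b1 ->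
  is_taylor1 (fun d => F d * G d) (a0 * b0) (a0 * b1 + a1 * b0).
Proof.
  intros [Ka HF] [Kb HG].
  exists (Rabs (a1 * b1) + Rabs Ka * (Rabs b0 + Rabs b1 + Rabs Kb)
          + Rabs Kb * (Rabs a0 + Rabs a1)).
  intros d Hd. specialize (HF d Hd). specialize (HG d Hd).
  set (alpha := F d - (a0 + a1 * d)) in HF. set (beta := G d - (b0 + b1 * d)) in HG.
  assert (Hd2 : 0 <= d ^ 2 <= 1) by nra.
  assert (Halpha : Rabs alpha <= Rabs Ka * d ^ 2) by (pose proof (Rle_abs Ka); nra).
  assert (Hbeta : Rabs beta <= Rabs Kb * d ^ 2) by (pose proof (Rle_abs Kb); nra).
  assert (HGd : Rabs (G d) <= Rabs b0 + Rabs b1 + Rabs Kb).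
  { replace (G d) with (b0 + b1 * d + beta) by (unfold beta; ring).
    pose proof (Rabs_triang (b0 + b1 * d) beta). pose proof (Rabs_triang b0 (b1 * d)).
    rewrite Rabs_mult, (Rabs_right d) in * by lra.
    pose proof (Rabs_pos b1). pose proof (Rabs_pos Kb). nra. }
  assert (Hlin : Rabs (a0 + a1 * d) <= Rabs a0 + Rabs a1).
  { pose proof (Rabs_triang a0 (a1 * d)). rewrite Rabs_mult, (Rabs_right d) in * by lra.
    pose proof (Rabs_pos a1). nra. }
  replace (F d * G d - (a0 * b0 + (a0 * b1 + a1 * b0) * d))
    with (a1 * b1 * d ^ 2 + alpha * G d + (a0 + a1 * d) * beta) by (unfold alpha, beta; ring).
  pose proof (Rabs_triang (a1 * b1 * d ^ 2 + alpha * G d) ((a0 + a1 * d) * beta)).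
  pose proof (Rabs_triang (a1 * b1 * d ^ 2) (alpha * G d)).
  rewrite !Rabs_mult, (Rabs_right (d ^ 2)) in * by lra.
  pose proof (Rabs_pos alpha). pose proof (Rabs_pos beta). pose proof (Rabs_pos (G d)).
  pose proof (Rabs_pos (a0 + a1 * d)).
  assert (Rabs alpha * Rabs (G d) <= Rabs Ka * d ^ 2 * (Rabs b0 + Rabs b1 + Rabs Kb))
    by (apply Rmult_le_compat; lra).
  assert (Rabs (a0 + a1 * d) * Rabs beta <= (Rabs a0 + Rabs a1) * (Rabs Kb * d ^ 2))
    by (apply Rmult_le_compat; lra).
  nra.
Qed.

Lemma is_taylor1_exp r : is_taylor1 (fun d => exp (r + d)) (exp r) (exp r).
Proof.
  exists (2 * exp r). intros d [Hd0 Hd1].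
  set (theta := exp d - 1 - d).
  assert (Htheta : 0 <= theta <= 2 * d ^ 2).
  { unfold theta. pose proof (exp_ineq1_le d). pose proof (exp_ineq1_le (- d)).
    assert (Hinv : exp d * exp (- d) = 1) by (rewrite <- exp_plus, Rplus_opp_r; apply exp_0).
    pose proof (exp_pos d).
    assert (exp d * (1 - d) <= 1) by nra.
    assert ((1 - d) * (1 + d + 2 * d ^ 2) >= 1) by nra.
    nra. }
  replace (exp (r + d) - (exp r + exp r * d)) with (exp r * theta)
    by (unfold theta; rewrite exp_plus; ring).
  pose proof (exp_pos r).
  rewrite Rabs_mult, !Rabs_right by lra. nra.
Qed.

Lemma is_taylor1_E1 E1 r : is_E1 E1 -> 0 < r ->
  is_taylor1 (fun d => E1 (r + d)) (E1 r) (- E1_integrand r).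
Proof.
  intros HE1 Hr. exists (- E1_integrand' r / 2). intros d [Hd0 Hd1].
  assert (Hint : forall x, 0 < x -> improper_int_infty E1_integrand x (E1 x)) by exact HE1.
  pose proof (improper_int_infty_sub _ r (r + d) _ _ ltac:(lra) (Hint r Hr) (Hint (r + d) ltac:(lra))).
  destruct (improper_int_infty_RInt _ _ _ (Hint r Hr)) as [Hex _].
  pose proof (RInt_tangent_bounds E1_integrand E1_integrand' E1_integrand_tangent
                E1_integrand'_nonpos r d Hr Hd0 (Hex (r + d) ltac:(lra))).
  rewrite Rabs_right by lra. lra.
Qed.

Definition weighted_E1 (E1 : R -> R) (t : R) : R := t * exp t * E1 t.

Lemma weighted_E1_taylor E1 r : is_E1 E1 -> 0 < r ->
  is_taylor1 (fun d => weighted_E1 E1 (r + d)) (weighted_E1 E1 r) ((1 + r) * exp r * E1 r - 1).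
Proof.
  intros HE1 Hr.
  destruct (is_taylor1_mult _ _ _ _ _ _
              (is_taylor1_mult _ _ _ _ _ _ (is_taylor1_affine r 1) (is_taylor1_exp r))
              (is_taylor1_E1 E1 r HE1 Hr)) as [K HK].
  exists K. intros d Hd. specialize (HK d Hd). cbv beta in HK.
  assert (Hrg : r * exp r * E1_integrand r = 1).
  { unfold E1_integrand. rewrite exp_Ropp. field. split; [apply Rgt_not_eq, exp_pos | lra]. }
  replace (r + 1 * d) with (r + d) in HK by ring.
  replace ((1 + r) * exp r * E1 r - 1)
    with (r * exp r * - E1_integrand r + (r * exp r + 1 * exp r) * E1 r) by lra.
  exact HK.
Qed.

Definition xi_step (S : R) : R := sqrt 6 * S.
Definition xi_start (S omega : R) : R := xi_step S * (2 * Aparam S omega + 2).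

Lemma xi_step_bounds S : 0 < S -> 0 < xi_step S <= 3 * S.
Proof.
  intros HS. unfold xi_step.
  assert (H6 : sqrt 6 * sqrt 6 = 6) by (apply sqrt_sqrt; lra).
  pose proof (sqrt_lt_R0 6 ltac:(lra)). nra.
Qed.

Lemma xi_start_pos S omega : 0 < S -> 0 < xi_start S omega.
Proof.
  intros HS. pose proof (xi_step_bounds S HS). assert (0 <= Aparam S omega) by apply sqrt_pos.
  unfold xi_start. nra.
Qed.

Lemma Xi_term_eq S omega n : 0 < S ->
  Xi_term S omega n = xi_start S omega * exp (xi_start S omega)
                      * E1_integrand (xi_start S omega + INR n * xi_step S).
Proof.
  intros HS. pose proof (xi_step_bounds S HS). pose proof (xi_start_pos S omega HS).
  pose proof (pos_INR n). assert (0 <= Aparam S omega) by apply sqrt_pos.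
  unfold Xi_term, Defs.sigma, E1_integrand.
  fold (xi_step S). fold (Aparam S omega).
  rewrite <- (Rpower_pow n (exp _) (exp_pos _)). unfold Rpower. rewrite ln_exp.
  replace (exp (- (xi_start S omega + INR n * xi_step S)))
    with (/ exp (xi_start S omega) * exp (INR n * - xi_step S))
    by (rewrite <- exp_Ropp, <- exp_plus; f_equal; ring).
  replace (xi_start S omega + INR n * xi_step S)
    with (xi_step S * (INR n + 2 * Aparam S omega + 2)) by (unfold xi_start; ring).
  unfold xi_start. field. repeat split; apply Rgt_not_eq; [apply exp_pos | lra | lra].
Qed.

Lemma Xi_trapezoid E1 S omega X : 0 < S -> is_E1 E1 -> infinite_sum (Xi_term S omega) X ->
  Rabs (X - (weighted_E1 E1 (xi_start S omega) / xi_step S + / 2))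
  <= xi_step S * (1 + / xi_start S omega) / 2.
Proof.
  intros HS HE1 HX.
  pose proof (xi_step_bounds S HS) as [He _]. pose proof (xi_start_pos S omega HS) as Hs.
  set (e := xi_step S) in *. set (s := xi_start S omega) in *.
  set (c := s * exp s).
  assert (Hc : 0 < c) by (apply Rmult_lt_0_compat; [exact Hs | apply exp_pos]).
  assert (Hnz : c <> 0 /\ e <> 0 /\ s <> 0 /\ exp s <> 0)
    by (repeat split; apply Rgt_not_eq; try apply exp_pos; assumption).
  assert (Hsum : infinite_sum (fun n => E1_integrand (s + INR n * e)) (X / c)).
  { apply is_series_Reals. apply is_series_Reals in HX.
    replace (X / c) with (scal (/ c) X) by (unfold scal; simpl; unfold mult; simpl; field; tauto).
    apply (is_series_ext (fun n => scal (/ c) (Xi_term S omega n))); [| exact (is_series_scal_l _ _ _ HX)].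
    intros n. rewrite Xi_term_eq by exact HS. unfold scal; simpl; unfold mult; simpl.
    fold s e c. field. tauto. }
  pose proof (trapezoid_series E1_integrand E1_integrand' E1_integrand_tangent
                E1_integrand'_nonpos E1_integrand_nonneg
                E1_integrand_vanishes s e (E1 s) (X / c) Hs He (HE1 s Hs) Hsum) as Htrap.
  set (L := e * (X / c) - e * E1_integrand s / 2 - E1 s) in Htrap.
  assert (Hid : X - (weighted_E1 E1 s / e + / 2) = c / e * L).
  { unfold L, c, weighted_E1, E1_integrand. rewrite exp_Ropp. field. tauto. }
  assert (Hbound : c / e * (- e ^ 2 * E1_integrand' s / 2) = e * (1 + / s) / 2)
    by (unfold c, E1_integrand'; rewrite exp_Ropp; field; tauto).
  assert (Hce : 0 < c / e) by (apply Rdiv_lt_0_compat; assumption).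
  rewrite Hid, Rabs_mult, !Rabs_right by lra. rewrite <- Hbound.
  apply Rmult_le_compat_l; lra.
Qed.

Lemma sqrt_excess_bounds r w c : 0 < r -> 0 <= w -> w ^ 2 = r ^ 2 + c -> 0 <= c ->
  0 <= w - r /\ 2 * r * (w - r) <= c.
Proof. intros Hr Hw Hsq Hc. assert (r <= w) by nra. split; nra. Qed.

Lemma xi_start_bounds S omega : 0 < S -> 0 < omega ->
  let r := 2 * sqrt (3 * omega) in let e := xi_step S in
  0 <= xi_start S omega - r - 2 * e /\ r * (xi_start S omega - r - 2 * e) <= 2 * e ^ 2.
Proof.
  intros HS Hom r e.
  assert (HA : Aparam S omega * Aparam S omega = 1 + omega / (2 * S ^ 2)).
  { apply sqrt_sqrt. assert (0 < omega / (2 * S ^ 2)) by (apply Rdiv_lt_0_compat; nra). lra. }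
  assert (H6 : sqrt 6 * sqrt 6 = 6) by (apply sqrt_sqrt; lra).
  assert (H3 : sqrt (3 * omega) * sqrt (3 * omega) = 3 * omega) by (apply sqrt_sqrt; lra).
  pose proof (xi_step_bounds S HS). assert (0 <= Aparam S omega) by apply sqrt_pos.
  destruct (sqrt_excess_bounds r (2 * e * Aparam S omega) (4 * e ^ 2)) as [Hlo Hhi].
  - unfold r. pose proof (sqrt_lt_R0 (3 * omega) ltac:(lra)). lra.
  - unfold e. nra.
  - unfold r, e, xi_step.
    replace ((2 * (sqrt 6 * S) * Aparam S omega) ^ 2)
      with (4 * (sqrt 6 * sqrt 6) * S ^ 2 * (Aparam S omega * Aparam S omega)) by ring.
    rewrite H6, HA. field_simplify; [| nra]. nra.
  - nra.
  - replace (xi_start S omega - r - 2 * e) with (2 * e * Aparam S omega - r)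
      by (unfold xi_start; fold e; ring).
    split; lra.
Qed.

Lemma xi_coefficients E1 r S : 0 < S ->
  xi_m1 E1 r * (sqrt 6 / S) + xi_0 E1 r
  = weighted_E1 E1 r / xi_step S + 2 * ((1 + r) * exp r * E1 r - 1) + / 2.
Proof.
  intros HS. assert (H6 : sqrt 6 * sqrt 6 = 6) by (apply sqrt_sqrt; lra).
  pose proof (sqrt_lt_R0 6 ltac:(lra)).
  unfold xi_m1, xi_0, weighted_E1, xi_step.
  replace (/ 6) with (/ (sqrt 6 * sqrt 6)) by (rewrite H6; reflexivity).
  field. split; apply Rgt_not_eq; lra.
Qed.

Lemma shifted_expansion_bound X Pd P0 P1 K r e d :
  0 < r -> 0 < e -> e <= r / 2 -> 0 <= d - 2 * e -> r * (d - 2 * e) <= 2 * e ^ 2 ->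
  Rabs (X - (Pd / e + / 2)) <= e * (1 + / (r + d)) / 2 ->
  Rabs (Pd - (P0 + P1 * d)) <= K * d ^ 2 ->
  Rabs (X - (P0 / e + 2 * P1 + / 2)) <= ((1 + / r) / 2 + 9 * Rabs K + 2 * Rabs P1 / r) * e.
Proof.
  intros Hr He Her Hd0 Hd1 HX HP.
  assert (Hd3 : d <= 3 * e) by nra.
  assert (Hnz : e <> 0 /\ r <> 0) by (split; apply Rgt_not_eq; assumption).
  replace (X - (P0 / e + 2 * P1 + / 2))
    with ((X - (Pd / e + / 2)) + (Pd - (P0 + P1 * d)) / e + P1 * ((d - 2 * e) / e)) by (field; tauto).
  assert (Hinv : / (r + d) <= / r) by (apply Rinv_le_contravar; lra).
  assert (H1 : Rabs (X - (Pd / e + / 2)) <= e * (1 + / r) / 2) by nra.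
  assert (H2 : Rabs ((Pd - (P0 + P1 * d)) / e) <= 9 * Rabs K * e).
  { unfold Rdiv. rewrite Rabs_mult, (Rabs_right (/ e)) by (apply Rle_ge, Rlt_le, Rinv_0_lt_compat, He).
    apply (Rmult_le_reg_r e); [exact He |]. rewrite Rmult_assoc, Rinv_l by (apply Rgt_not_eq, He).
    assert (K * d ^ 2 <= Rabs K * d ^ 2) by (apply Rmult_le_compat_r; [nra | apply Rle_abs]).
    assert (Rabs K * d ^ 2 <= Rabs K * (3 * e) ^ 2)
      by (apply Rmult_le_compat_l; [apply Rabs_pos | nra]).
    lra. }
  assert (H3 : Rabs (P1 * ((d - 2 * e) / e)) <= 2 * Rabs P1 / r * e).
  { rewrite Rabs_mult, (Rabs_right ((d - 2 * e) / e)) by (apply Rle_ge, Rdiv_le_0_compat; lra).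
    assert (Hq : (d - 2 * e) / e <= 2 * e / r).
    { apply (Rmult_le_reg_r (e * r)); [nra |].
      replace ((d - 2 * e) / e * (e * r)) with (r * (d - 2 * e)) by (field; tauto).
      replace (2 * e / r * (e * r)) with (2 * e ^ 2) by (field; tauto). exact Hd1. }
    pose proof (Rabs_pos P1).
    replace (2 * Rabs P1 / r * e) with (Rabs P1 * (2 * e / r)) by (field; tauto).
    apply Rmult_le_compat_l; assumption. }
  pose proof (Rabs_triang (X - (Pd / e + / 2) + (Pd - (P0 + P1 * d)) / e) (P1 * ((d - 2 * e) / e))).
  pose proof (Rabs_triang (X - (Pd / e + / 2)) ((Pd - (P0 + P1 * d)) / e)).
  lra.
Qed.

Theorem mainTheorem15 :
  forall (omega : R) (E1 : R -> R) (Xi : R -> R),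
    omega > 0 ->
    is_E1 E1 ->
    (forall S, S > 0 -> infinite_sum (Xi_term S omega) (Xi S)) ->
    exists C delta, C > 0 /\ delta > 0 /\
      forall S, 0 < S < delta ->
        Rabs (Xi S
              - (xi_m1 E1 (2 * sqrt (3 * omega)) * (sqrt 6 / S)
                 + xi_0 E1 (2 * sqrt (3 * omega))))
        <= C * S.
Proof.
  intros omega E1 Xi Hom HE1 HXi.
  set (r := 2 * sqrt (3 * omega)).
  assert (Hr : 0 < r) by (unfold r; pose proof (sqrt_lt_R0 (3 * omega) ltac:(lra)); lra).
  set (P1 := (1 + r) * exp r * E1 r - 1).
  destruct (weighted_E1_taylor E1 r HE1 Hr) as [K HK]. fold P1 in HK.
  set (C0 := (1 + / r) / 2 + 9 * Rabs K + 2 * Rabs P1 / r).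
  assert (HC0 : 0 < C0).
  { pose proof (Rinv_0_lt_compat r Hr). pose proof (Rabs_pos K). pose proof (Rabs_pos P1).
    assert (0 <= 2 * Rabs P1 / r) by (apply Rdiv_le_0_compat; lra). unfold C0. lra. }
  (* [S < r / 6] gives [e <= r / 2], and [S < 1 / 18] then gives [d <= 3 e <= 1 / 2]. *)
  exists (3 * C0), (Rmin (r / 6) (/ 18)).
  split; [lra | split; [apply Rmin_glb_lt; lra |]].
  intros S [HS HSd]. pose proof (Rmin_l (r / 6) (/ 18)). pose proof (Rmin_r (r / 6) (/ 18)).
  pose proof (xi_step_bounds S HS) as He.
  destruct (xi_start_bounds S omega HS Hom) as [Hd0 Hd1]. fold r in Hd0, Hd1.
  set (e := xi_step S) in *. set (d := xi_start S omega - r) in *.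
  rewrite (xi_coefficients E1 r S HS). fold e P1.
  eapply Rle_trans.
  - apply (shifted_expansion_bound _ (weighted_E1 E1 (r + d)) _ _ K r e d); try lra.
    + replace (r + d) with (xi_start S omega) by (unfold d; ring).
      exact (Xi_trapezoid E1 S omega (Xi S) HS HE1 (HXi S HS)).
    + apply HK. nra.
  - fold C0. nra.
Qed.
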